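(* Let $A \in \mathbb{R}^{n\times d}$, $b \in \mathbb{R}^n$. Let $w$ be a random variable in $\mathbb{R}^n$ and let $\mathcal{N}(w) = \mathrm{span}\lbrace z \in \mathbb{R}^d : \mathbb{P}[z'A'w = 0]=1\rbrace$, $\mathcal{R}(w) = \mathcal{N}(w)^\perp$. Let $w_0, w_1, \ldots$ be random variables in $\mathbb{R}^n$ (on the same probability space) with $\mathbb{P}[A'w_l \in \mathcal{R}(w)] = 1$ for all $l \geq 0$, and let $T = \min\lbrace k \geq 0 : \mathrm{span}\lbrace A'w_0,\ldots,A'w_k\rbrace \supset \mathcal{R}(w)\rbrace$. Let $x_0 \in \mathbb{R}^d$ be arbitrary, $S_0 = I_d$, and for $l \geq 0$ $$x_{l+1} = \begin{cases} x_l + \dfrac{S_l A' w_l w_l'(b - A x_l)}{w_l' A S_l A' w_l} & S_l A'w_l \neq 0,\\ x_l & \text{otherwise,}\end{cases}\qquad S_{l+1} = \begin{cases} S_l - \dfrac{S_l A' w_l w_l' A S_l}{w_l' A S_l A' w_l} & S_l A' w_l \neq 0,\\ S_l & \text{otherwise.}\end{cases}$$ Then, almost surely on the event $\lbrace T < \infty\rbrace$: (1) for every $s \geq T+1$, $S_{T+1} = S_s$ and $x_{T+1} = x_s$; (2) if $Ax = b$ admits a solution $x^*$ (not necessarily unique), then $x_{T+1} = P_{\mathcal{N}(w)} x_0 + P_{\mathcal{R}(w)} x^*$.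
   Context: $P_W$ denotes the orthogonal projection matrix onto a subspace $W \subset \mathbb{R}^d$; $A'$ is the transpose of $A$. *)

From HB Require Import structures.
From mathcomp Require Import all_boot all_order all_algebra.
From mathcomp Require Import all_classical all_reals.
From mathcomp Require Import measure lebesgue_measure probability.
Set Implicit Arguments. Unset Strict Implicit. Unset Printing Implicit Defensive.
Import Order.TTheory GRing.Theory Num.Theory.
Local Open Scope ring_scope.
Local Open Scope classical_set_scope.

Section Defs.
Variable R : realType.

Definition dotv (d : nat) (u v : 'cV[R]_d) : R := (u^T *m v) 0 0.

Definition span_set (d : nat) (S : set 'cV[R]_d) : set 'cV[R]_d :=
  [set v | exists (k : nat) (c : 'I_k -> R) (z : 'I_k -> 'cV[R]_d),
      (forall i, S (z i)) /\ v = \sum_(i < k) c i *: z i].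

Definition orth_compl (d : nat) (W : set 'cV[R]_d) : set 'cV[R]_d :=
  [set v | forall z, W z -> dotv z v = 0].

Definition orth_proj (d : nat) (W : set 'cV[R]_d) (x : 'cV[R]_d) : 'cV[R]_d :=
  xget 0 [set y | W y /\ orth_compl W (x - y)].

Definition kacz_step (n d : nat) (A : 'M[R]_(n, d)) (b : 'cV[R]_n)
    (w : 'cV[R]_n) (xS : 'cV[R]_d * 'M[R]_d) : 'cV[R]_d * 'M[R]_d :=
  let x := xS.1 in let S := xS.2 in
  let u := S *m A^T *m w in
  if u == 0 then (x, S)
  else let den := (w^T *m A *m S *m A^T *m w) 0 0 in
       (x + den^-1 *: (u *m (w^T *m (b - A *m x))),
        S - den^-1 *: (u *m (w^T *m A *m S))).

Fixpoint kacz_iter (n d : nat) (A : 'M[R]_(n, d)) (b : 'cV[R]_n)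
    (x0 : 'cV[R]_d) (ws : nat -> 'cV[R]_n) (l : nat) : 'cV[R]_d * 'M[R]_d :=
  match l with
  | 0 => (x0, 1%:M)
  | l'.+1 => kacz_step A b (ws l') (kacz_iter A b x0 ws l')
  end.
End Defs.

From HB Require Import structures.
From mathcomp Require Import all_boot all_order all_algebra.
From mathcomp Require Import all_classical all_reals.
From mathcomp Require Import measure lebesgue_measure probability.
From mathcomp Require Import zify ring.
Import Order.TTheory GRing.Theory Num.Theory.
Local Open Scope ring_scope.
Local Open Scope classical_set_scope.
Set Implicit Arguments. Unset Strict Implicit. Unset Printing Implicit Defensive.

(* Writing a_l = A'w_l and V_l = span {a_j : j < l}, the iteration keeps the
   invariant that S_l is the orthogonal projector onto the complement of V_l,
   that x_l - x_0 lies in V_l and that x* - x_l is orthogonal to V_l; in other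
   words x_l = P_{V_l^perp} x_0 + P_{V_l} x*.  As soon as a_l already lies in
   V_l we get S_l a_l = 0 and the step is idle.  Almost surely every a_l lies
   in R(w), so by the definition of T we have V_{T+1} = R(w): the iteration is
   stationary from T+1 on, and x_{T+1} is the claimed sum of projections. *)

Section DotProduct.
Variables (R : realType) (d : nat).
Implicit Types (u v y z : 'cV[R]_d).

Lemma dotvE u v : dotv u v = \sum_i u i 0 * v i 0.
Proof. by rewrite /dotv mxE; apply: eq_bigr => i _; rewrite mxE. Qed.

Lemma dotvC u v : dotv u v = dotv v u.
Proof. by rewrite !dotvE; apply: eq_bigr => i _; rewrite mulrC. Qed.

Lemma dotv0r u : dotv u 0 = 0.
Proof. by rewrite /dotv mulmx0 mxE. Qed.

Lemma dotv0l u : dotv 0 u = 0.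
Proof. by rewrite dotvC dotv0r. Qed.

Lemma dotvDr z u v : dotv z (u + v) = dotv z u + dotv z v.
Proof. by rewrite /dotv mulmxDr mxE. Qed.

Lemma dotvZr z a u : dotv z (a *: u) = a * dotv z u.
Proof. by rewrite /dotv -scalemxAr mxE. Qed.

Lemma dotvBr z u v : dotv z (u - v) = dotv z u - dotv z v.
Proof. by rewrite dotvDr -scaleN1r dotvZr mulN1r. Qed.

Lemma dotvDl z u v : dotv (u + v) z = dotv u z + dotv v z.
Proof. by rewrite !(dotvC _ z) dotvDr. Qed.

Lemma dotvZl z a u : dotv (a *: u) z = a * dotv u z.
Proof. by rewrite !(dotvC _ z) dotvZr. Qed.

Lemma dotvv_eq0 u : dotv u u = 0 -> u = 0.
Proof.
rewrite dotvE => /psumr_eq0P u0; apply/matrixP => i j; rewrite (ord1 j) mxE.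
have /eqP := u0 (fun i _ => sqr_ge0 (u i 0)) i isT.
by rewrite mulf_eq0 orbb => /eqP.
Qed.

Lemma mulmx_mx11 m (u : 'M[R]_(m, 1)) (M : 'M[R]_1) : u *m M = M 0 0 *: u.
Proof. by rewrite {1}[M]mx11_scalar mul_mx_scalar. Qed.

End DotProduct.

Section Subspaces.
Variables (R : realType) (d : nat).
Implicit Types (u v y z : 'cV[R]_d) (S W : set 'cV[R]_d).

Definition is_subspace W := W 0 /\ forall a u v, W u -> W v -> W (a *: u + v).

Lemma subspaceD W u v : is_subspace W -> W u -> W v -> W (u + v).
Proof. by move=> [_ Wlin] Wu Wv; have := Wlin 1 u v Wu Wv; rewrite scale1r. Qed.

Lemma subspaceZ W a u : is_subspace W -> W u -> W (a *: u).
Proof. by move=> [W0 Wlin] Wu; have := Wlin a u 0 Wu W0; rewrite addr0. Qed.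

Lemma subspaceB W u v : is_subspace W -> W u -> W v -> W (u - v).
Proof. by move=> sW Wu Wv; rewrite -scaleN1r; apply: subspaceD; last exact: subspaceZ. Qed.

Lemma subspace_sum W k (c : 'I_k -> R) (z : 'I_k -> 'cV[R]_d) :
  is_subspace W -> (forall i, W (z i)) -> W (\sum_(i < k) c i *: z i).
Proof.
move=> sW; elim: k c z => [|k IH] c z Wz; first by rewrite big_ord0; case: sW.
rewrite big_ord_recr /=; apply: subspaceD => //; last exact: subspaceZ.
exact: (IH (fun i => c (widen_ord (leqnSn k) i))).
Qed.

Lemma subspace_span S : is_subspace (span_set S).
Proof.
split; first by exists 0%N, (fun _ => 0), (fun _ => 0); rewrite big_ord0; split => [[]|].
move=> a u v [k1 [c1 [z1 [Sz1 ->]]]] [k2 [c2 [z2 [Sz2 ->]]]].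
exists (k1 + k2)%N,
  (fun i => match fintype.split i with inl j => a * c1 j | inr j => c2 j end),
  (fun i => match fintype.split i with inl j => z1 j | inr j => z2 j end).
split; first by move=> i; case: (fintype.split i).
rewrite big_split_ord /= scaler_sumr; congr (_ + _); apply: eq_bigr => i _.
  by rewrite (unsplitK (inl i)) scalerA.
by rewrite (unsplitK (inr i)).
Qed.

Lemma subset_span S : S `<=` span_set S.
Proof.
move=> v Sv; exists 1%N, (fun _ => 1), (fun _ => v).
by rewrite big_ord1 scale1r.
Qed.

Lemma span_subset S W : is_subspace W -> S `<=` W -> span_set S `<=` W.
Proof. by move=> sW SW v [k [c [z [Sz ->]]]]; apply: subspace_sum => // i; apply: SW. Qed.

Lemma subspace_orth_compl W : is_subspace (orth_compl W).
Proof.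
split=> [z _|a u v Wu Wv z Wz]; first exact: dotv0r.
by rewrite dotvDr dotvZr Wu // Wv // mulr0 addr0.
Qed.

Lemma subspace_orth_vec y : is_subspace [set z | dotv z y = 0].
Proof.
split=> [|a u v /= uy vy]; first exact: dotv0l.
by rewrite dotvDl dotvZl uy vy mulr0 addr0.
Qed.

Definition prefix_span (a : nat -> 'cV[R]_d) l :=
  span_set [set v | exists j, (j < l)%N /\ v = a j].

Variable a : nat -> 'cV[R]_d.

Lemma prefix_span_mono i j : (i <= j)%N -> prefix_span a i `<=` prefix_span a j.
Proof.
move=> ij; apply: span_subset; first exact: subspace_span.
by move=> _ [k [ki ->]]; apply: subset_span; exists k; split => //; apply: leq_trans ij.
Qed.

Lemma prefix_span_last l : prefix_span a l.+1 (a l).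
Proof. by apply: subset_span; exists l. Qed.

Lemma prefix_spanS_subset W l : is_subspace W ->
  prefix_span a l `<=` W -> W (a l) -> prefix_span a l.+1 `<=` W.
Proof.
move=> sW lW Wa; apply: span_subset => // _ [j [+ ->]].
rewrite ltnS leq_eqVlt => /orP [/eqP -> //| jl].
by apply: lW; apply: subset_span; exists j.
Qed.

Lemma prefix_span0 z : prefix_span a 0 z -> z = 0.
Proof. by move=> [k [c [y [y0 ->]]]]; apply: big1 => i _; have [j []] := y0 i. Qed.

(* A Gram--Schmidt step: the multiple of [u] is chosen to cancel [dotv (a l) _]. *)
Lemma prefix_span_orthS l u v :
  (forall z, prefix_span a l z -> dotv z v = 0) ->
  (forall z, prefix_span a l z -> dotv z u = 0) -> dotv (a l) u != 0 ->
  forall z, prefix_span a l.+1 z -> dotv z (v - (dotv (a l) v / dotv (a l) u) *: u) = 0.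
Proof.
move=> lv lu au0; apply: (prefix_spanS_subset (subspace_orth_vec _)) => [z lz|] /=.
  by rewrite dotvBr dotvZr (lv z lz) (lu z lz) mulr0 subr0.
by rewrite dotvBr dotvZr mulfVK // subrr.
Qed.

End Subspaces.

Section Projection.
Variables (R : realType) (d : nat).
Implicit Types (x y : 'cV[R]_d) (W : set 'cV[R]_d).

Definition has_proj W x := exists y, W y /\ orth_compl W (x - y).

Lemma orth_projE W x y : is_subspace W -> W y -> orth_compl W (x - y) ->
  orth_proj W x = y.
Proof.
move=> sW Wy xy; apply: xget_unique => // y' [Wy' xy'].
apply/subr0_eq/dotvv_eq0; have Wdiff := subspaceB sW Wy' Wy.
rewrite {2}(_ : y' - y = (x - y) - (x - y')); last by rewrite opprB [RHS]addrC addrA subrK.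
by rewrite dotvBr xy // xy' // subrr.
Qed.

(* The difference x - (P_N x0 + P_{N^perp} xs) lies in N^perp and, because N is
   orthogonal to N^perp, it is also orthogonal to N^perp. *)
Lemma orth_projD_compl N x0 xs x : is_subspace N ->
  has_proj N x0 -> has_proj (orth_compl N) xs ->
  orth_compl N (x - x0) -> orth_compl (orth_compl N) (xs - x) ->
  x = orth_proj N x0 + orth_proj (orth_compl N) xs.
Proof.
move=> sN [p [Np x0p]] [q [Rq xsq]] Rx xsx.
have sR := subspace_orth_compl N; have sRR := subspace_orth_compl (orth_compl N).
rewrite (orth_projE sN Np x0p) (orth_projE sR Rq xsq).
apply/eqP; rewrite -subr_eq0; apply/eqP/dotvv_eq0.
have Re : orth_compl N (x - (p + q)).
  have -> : x - (p + q) = (x - x0) + (x0 - p) - q.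
    by apply/matrixP => i j; rewrite !mxE; ring.
  by apply: (subspaceB sR) => //; apply: (subspaceD sR).
have RRe : orth_compl (orth_compl N) (x - (p + q)).
  have -> : x - (p + q) = (xs - q) - (xs - x) - p.
    by apply/matrixP => i j; rewrite !mxE; ring.
  apply: (subspaceB sRR); first exact: (subspaceB sRR).
  by move=> z Rz; rewrite dotvC; apply: Rz.
exact: RRe _ Re.
Qed.

End Projection.

Section KaczmarzStep.
Variables (R : realType) (n d : nat) (A : 'M[R]_(n, d)) (b : 'cV[R]_n).
Variables (w : 'cV[R]_n) (a : 'cV[R]_d) (x : 'cV[R]_d) (S : 'M[R]_d).
Hypothesis aE : A^T *m w = a.

Let u := S *m a.

Lemma kacz_step_idle : u = 0 -> kacz_step A b w (x, S) = (x, S).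
Proof. by rewrite /kacz_step /= -mulmxA aE -/u => ->; rewrite eqxx. Qed.

Lemma kacz_step_den : (w^T *m A *m S *m A^T *m w) 0 0 = dotv a u.
Proof. by rewrite /dotv /u -aE trmx_mul trmxK !mulmxA. Qed.

Lemma kacz_step_fst : u != 0 ->
  (kacz_step A b w (x, S)).1 = x + ((w^T *m (b - A *m x)) 0 0 / dotv a u) *: u.
Proof.
rewrite /kacz_step /= -mulmxA aE -/u => /negPf ->.
by rewrite /= kacz_step_den mulmx_mx11 scalerA mulrC.
Qed.

Lemma kacz_step_snd_mulmx y : u != 0 ->
  (kacz_step A b w (x, S)).2 *m y = S *m y - (dotv a (S *m y) / dotv a u) *: u.
Proof.
rewrite /kacz_step /= -mulmxA aE -/u => /negPf ->.
rewrite /= kacz_step_den mulmxBl -scalemxAl -(mulmxA u) mulmx_mx11 scalerA mulrC.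
by rewrite /dotv -aE trmx_mul trmxK !mulmxA.
Qed.

Lemma kacz_resid_dotv xs : A *m xs = b -> (w^T *m (b - A *m x)) 0 0 = dotv a (xs - x).
Proof. by move=> <-; rewrite -mulmxBr /dotv -aE trmx_mul trmxK mulmxA. Qed.

End KaczmarzStep.

Section KaczmarzInvariant.
Variables (R : realType) (n d : nat) (A : 'M[R]_(n, d)) (b : 'cV[R]_n).
Variables (x0 : 'cV[R]_d) (ws : nat -> 'cV[R]_n) (a : nat -> 'cV[R]_d).
Hypothesis wsE : forall j, A^T *m ws j = a j.

Local Notation V := (prefix_span a).
Local Notation iter := (kacz_iter A b x0 ws).

Record kacz_inv l (x : 'cV[R]_d) (S : 'M[R]_d) : Prop := KaczInv {
  kacz_inv_compl : forall y, V l (y - S *m y);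
  kacz_inv_orth : forall z y, V l z -> dotv z (S *m y) = 0;
  kacz_inv_shift : V l (x - x0);
  kacz_inv_resid : forall xs z, A *m xs = b -> V l z -> dotv z (xs - x) = 0 }.

Section Step.
Variables (l : nat) (x : 'cV[R]_d) (S : 'M[R]_d).
Hypothesis I : kacz_inv l x S.

Lemma kacz_inv_annihil z : V l z -> S *m z = 0.
Proof.
move=> lz; apply/dotvv_eq0/(kacz_inv_orth I).
have -> : S *m z = z - (z - S *m z) by rewrite opprB subrKC.
exact: (subspaceB (subspace_span _) lz (kacz_inv_compl I z)).
Qed.

Lemma kacz_inv_sym z y : dotv z (S *m y) = dotv (S *m z) (S *m y).
Proof.
rewrite -{1}(subrK (S *m z) z) dotvDl (kacz_inv_orth I) ?add0r //.
exact: (kacz_inv_compl I).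
Qed.

Lemma kacz_inv_idle : S *m a l = 0 -> kacz_inv l.+1 x S.
Proof.
move=> Sa0; have la : V l (a l) by have := kacz_inv_compl I (a l); rewrite Sa0 subr0.
have VE : V l.+1 = V l.
  rewrite eqEsubset; split; last exact: prefix_span_mono.
  exact: (prefix_spanS_subset (subspace_span _) (@subset_refl _ _)).
by have [c o s r] := I; split; rewrite VE.
Qed.

Lemma kacz_inv_update : S *m a l != 0 ->
  kacz_inv l.+1 (kacz_step A b (ws l) (x, S)).1 (kacz_step A b (ws l) (x, S)).2.
Proof.
set u := S *m a l => u0.
have Vmono := prefix_span_mono (a := a) (leqnSn l).
have lu : V l.+1 u.
  have -> : u = a l - (a l - u) by rewrite opprB subrKC.
  apply: (subspaceB (subspace_span _) (prefix_span_last a l)).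
  exact: Vmono (kacz_inv_compl I _).
have lcu c : V l.+1 (c *: u) by apply: subspaceZ lu; apply: subspace_span.
have au0 : dotv (a l) u != 0.
  by rewrite kacz_inv_sym; apply: contraNneq u0 => /dotvv_eq0/eqP.
have lorthu z : V l z -> dotv z u = 0 by move=> lz; apply: (kacz_inv_orth I).
split.
- move=> y; rewrite (kacz_step_snd_mulmx b x (wsE l) y u0) opprB addrCA addrC.
  apply: (subspaceD (subspace_span _)); last exact: lcu.
  exact: Vmono (kacz_inv_compl I y).
- move=> z y lz; rewrite (kacz_step_snd_mulmx b x (wsE l) y u0).
  by apply: prefix_span_orthS lz => // t lt; apply: (kacz_inv_orth I).
- rewrite (kacz_step_fst b x (wsE l) u0) addrAC.
  exact: (subspaceD (subspace_span _) (Vmono _ (kacz_inv_shift I)) (lcu _)).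
- move=> xs z Axs lz.
  rewrite (kacz_step_fst b x (wsE l) u0) (kacz_resid_dotv x (wsE l) Axs) opprD addrA.
  by apply: prefix_span_orthS lz => // t lt; apply: (kacz_inv_resid I).
Qed.

Lemma kacz_inv_step :
  kacz_inv l.+1 (kacz_step A b (ws l) (x, S)).1 (kacz_step A b (ws l) (x, S)).2.
Proof.
have [Sa0|] := eqVneq (S *m a l) 0; last exact: kacz_inv_update.
by rewrite (kacz_step_idle _ _ (wsE l) Sa0); apply: kacz_inv_idle.
Qed.

End Step.

Lemma kacz_inv_iter l : kacz_inv l (iter l).1 (iter l).2.
Proof.
elim: l => [|l IH] /=; last by case: (iter l) IH => x S; apply: kacz_inv_step.
have V00 : V 0 0 by case: (subspace_span [set v | exists j, (j < 0)%N /\ v = a j]).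
split=> [y|z y /prefix_span0 ->|| xs z _ /prefix_span0 ->]; rewrite ?dotv0l //.
  by rewrite mul1mx subrr.
by rewrite subrr.
Qed.

Lemma kacz_iter_idle l : V l (a l) -> iter l.+1 = iter l.
Proof.
move=> la /=; have := kacz_inv_iter l; case: (iter l) => x S I.
exact/kacz_step_idle/(kacz_inv_annihil I la).
Qed.

Lemma kacz_iter_stable l : (forall j, (l <= j)%N -> V l (a j)) ->
  forall s, (l <= s)%N -> iter s = iter l.
Proof.
move=> la s /subnKC <-; elim: (s - l)%N => [|k IH]; first by rewrite addn0.
rewrite addnS kacz_iter_idle ?IH //.
exact: prefix_span_mono (leq_addr k l) _ (la _ (leq_addr k l)).
Qed.

End KaczmarzInvariant.

Section ProjectionExistence.
Variables (R : realType) (d : nat).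
Implicit Types (x : 'cV[R]_d) (W : set 'cV[R]_d).

(* With A = I the iteration is Gram--Schmidt: S_k projects onto the complement
   of the span of z_0, ..., z_(k-1). *)
Lemma has_proj_prefix_span (z : nat -> 'cV[R]_d) k x : has_proj (prefix_span z k) x.
Proof.
have zE j : (1%:M : 'M[R]_d)^T *m z j = z j by rewrite trmx1 mul1mx.
have I := kacz_inv_iter 0 0 zE k; set S := (kacz_iter _ _ _ _ k).2 in I.
exists (x - S *m x); split; first exact: (kacz_inv_compl I).
by move=> t lt; rewrite opprB subrKC; apply: (kacz_inv_orth I).
Qed.

Lemma vspace_extend W (U : {vspace 'cV[R]_d}) v : is_subspace W ->
  (forall u, u \in U -> W u) -> W v -> v \notin U ->
  (forall u, u \in (U + <[v]>)%VS -> W u) /\ (\dim U < \dim (U + <[v]>))%N.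
Proof.
move=> sW UW Wv vU; split.
  move=> _ /memv_addP [u Uu [_ /vlineP [c ->] ->]].
  by rewrite addrC; apply: subspaceD (subspaceZ _ sW Wv) (UW _ Uu).
rewrite (ltn_leqif (dimv_leqif_sup (addvSl U <[v]>))).
by apply: contra vU => /subvP; apply; apply: subvP (addvSr U _) _ (memv_line v).
Qed.

Lemma subspace_vspace W : is_subspace W ->
  exists U : {vspace 'cV[R]_d}, forall v, W v <-> v \in U.
Proof.
move=> sW.
suff ind m (U : {vspace 'cV[R]_d}) : (\dim {:'cV[R]_d} - \dim U <= m)%N ->
    (forall u, u \in U -> W u) ->
    exists U' : {vspace 'cV[R]_d}, forall v, W v <-> v \in U'.
  apply: (ind _ 0%VS (leqnn _)) => u; rewrite memv0 => /eqP ->; by case: sW.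
elim: m U => [|m IH] U dimU UW;
  have [WU|/existsNP [v /not_implyP [Wv /negP vU]]] := pselect (forall v, W v -> v \in U);
  try by exists U => v; split; [apply: WU | apply: UW].
all: have [U'W ltU'] := vspace_extend sW UW Wv vU.
all: have leU' := dimvS (subvf (U + <[v]>)%VS).
  by lia.
by apply: IH U'W; lia.
Qed.

Lemma subspace_prefix_span W : is_subspace W ->
  exists k (z : nat -> 'cV[R]_d), W = prefix_span z k.
Proof.
move=> sW; have [U WU] := subspace_vspace sW.
exists (\dim U), (fun j => (vbasis U)`_j); rewrite eqEsubset; split => v.
  move=> /WU /coord_vbasis ->.
  exists (\dim U), (coord (vbasis U) ^~ v), (fun i => (vbasis U)`_i).
  by split => // i; exists i.
apply: span_subset => // _ [j [jU ->]]; apply/WU/vbasis_mem/mem_nth.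
by rewrite size_tuple.
Qed.

Lemma has_proj_subspace W x : is_subspace W -> has_proj W x.
Proof. by move=> /subspace_prefix_span [k [z ->]]; apply: has_proj_prefix_span. Qed.

End ProjectionExistence.

Theorem mainTheorem5 (R : realType) (dsp : measure_display)
  (Omega : measurableType dsp) (P : probability Omega R)
  (n d : nat) (A : 'M[R]_(n, d)) (b : 'cV[R]_n)
  (w : Omega -> 'cV[R]_n) (ws : nat -> Omega -> 'cV[R]_n) (x0 : 'cV[R]_d) :
  (forall i : 'I_n, measurable_fun setT (fun om => w om i 0)) ->
  (forall (l : nat) (i : 'I_n), measurable_fun setT (fun om => ws l om i 0)) ->
  let Nw := span_set [set z : 'cV[R]_d |
              {ae P, forall om, (z^T *m A^T *m w om) 0 0 = 0}] in
  let Rw := orth_compl Nw in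
  (forall l : nat, {ae P, forall om, Rw (A^T *m ws l om)}) ->
  let spanW (om : Omega) (k : nat) :=
    span_set [set v | exists j : nat, (j <= k)%N /\ v = A^T *m ws j om] in
  let isT (om : Omega) (k : nat) :=
    Rw `<=` spanW om k /\ (forall j : nat, (j < k)%N -> ~ (Rw `<=` spanW om j)) in
  let it (om : Omega) := kacz_iter A b x0 (fun l => ws l om) in
  {ae P, forall om, forall T : nat, isT om T ->
     (forall s : nat, (T.+1 <= s)%N ->
        (it om T.+1).2 = (it om s).2 /\ (it om T.+1).1 = (it om s).1) /\
     ((exists xs : 'cV[R]_d, A *m xs = b) ->
        forall xstar : 'cV[R]_d, A *m xstar = b ->
          (it om T.+1).1 = orth_proj Nw x0 + orth_proj Rw xstar)}.
Proof.
move=> _ _ Nw Rw dirR spanW isT it.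
apply: filterS (ae_foralln dirR) => om dirRom T [RwT _].
pose a j := A^T *m ws j om.
have aE j : A^T *m ws j om = a j by [].
have sN : is_subspace Nw by apply: subspace_span.
have sR : is_subspace Rw by apply: subspace_orth_compl.
have VR : prefix_span a T.+1 `<=` Rw.
  by apply: span_subset sR _ => _ [j [_ ->]]; apply: dirRom.
have RV : Rw `<=` prefix_span a T.+1.
  apply: subset_trans RwT _; apply: span_subset (subspace_span _) _.
  by move=> _ [j [jT ->]]; apply: subset_span; exists j.
have I := kacz_inv_iter b x0 aE T.+1.
split=> [s Ts|_ xs Axs].
  by rewrite /it (kacz_iter_stable b x0 aE _ Ts) // => j _; apply/RV/dirRom.
apply: orth_projD_compl (has_proj_subspace _ sN) (has_proj_subspace _ sR) _ _ => //.
  exact/VR/(kacz_inv_shift I).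
by move=> z /RV; apply: (kacz_inv_resid I).
Qed.
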